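(* Let ${\cal G}$ be a closed graph, $1\le\nu\le\infty$, and let $f\in C^1_{\rm Dir}({\cal G})$ be split. Then $$\|\nabla f\|_1\ge \widetilde I_\nu({\cal G})\,\|f\|_{\nu'}.$$
   Context: A graph ${\cal G}$ consists of an undirected graph $(V,E)$ (multiple edges and self-loops allowed), edge lengths $\ell_e>0$, boundary vertices $\partial{\cal G}\subseteq V$, a vertex measure ${\cal V}$ (supported on $V$, ${\cal V}(v)>0$) and an edge measure ${\cal E}$ (zero on vertices, $a_e>0$ times Lebesgue measure on the interior of edge $e$); ${\cal G}$ is identified with its geometric realization (closed interval of length $\ell_e$ joining the endpoints of each $e$). Closed graph: finitely many vertices and edges and $\partial{\cal G}=\emptyset$. $C^1_{\rm Dir}({\cal G})$: continuous functions, uniformly continuously differentiable on each open edge, vanishing on $\partial{\cal G}$ (here all functions are of finite type since ${\cal G}$ is finite). $\|f\|_q$ is the $L^q({\cal V})$ norm, $\|\nabla f\|_1=\int|\nabla f|\,d{\cal E}$, $\nu'$ the dual exponent. $f$ is split if ${\cal V}(\{f>0\})\le {\cal V}({\cal G})/2$ and ${\cal V}(\{f<0\})\le{\cal V}({\cal G})/2$. For open $\Omega$ with finite boundary, ${\cal A}(\partial\Omega)=\sum_{x\in\partial\Omega\setminus V}a_{e(x)}+\sum_{v\in\partial\Omega\cap V}\sum_{e:\,v\in\overline{\Omega\cap e^\circ}}a_e$ ($e(x)$ the edge containing $x$, $e^\circ$ the open interior of $e$). $\Omega$ is admissible if open, with finite boundary, disjoint from $\partial{\cal G}$. $\widetilde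 I_\nu({\cal G})=\inf_{\Omega\text{ admissible}}{\cal A}(\partial\Omega)\min({\cal V}(\Omega),{\cal V}(\complement\Omega))^{(1/\nu)-1}$. *)

From HB Require Import structures.
From mathcomp Require Import all_boot all_order all_algebra.
From mathcomp Require Import all_classical all_reals all_analysis.
Set Implicit Arguments. Unset Strict Implicit. Unset Printing Implicit Defensive.
Import Order.TTheory GRing.Theory Num.Theory.
Import numFieldNormedType.Exports.
Local Open Scope classical_set_scope.
Local Open Scope ring_scope.

(* A closed graph: finitely many vertices and edges, no boundary vertices.
   Each (undirected) edge e is realised as the closed interval [0, glen e]
   glued at 0 to gsrc e and at glen e to gdst e (the orientation is an
   arbitrary choice; gsrc e = gdst e is a self-loop; multiple edges allowed).
   Edge measure: ga e times Lebesgue measure on the interior of e.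
   Vertex measure: gmu v > 0 at each vertex. *)
Record closed_graph (R : realType) := ClosedGraph {
  gV : finType;
  gE : finType;
  gsrc : gE -> gV;
  gdst : gE -> gV;
  glen : gE -> R;
  ga : gE -> R;
  gmu : gV -> R;
  glen_gt0 : forall e, 0 < glen e;
  ga_gt0 : forall e, 0 < ga e;
  gmu_gt0 : forall v, 0 < gmu v }.

Section GeometricRealization.
Variables (R : realType) (G : closed_graph R).

(* points: a vertex, or (e, t) = the point at parameter t of edge e;
   only 0 < t < glen e are genuine (interior) points. *)
Definition gpt := (gV G + (gE G * R))%type.

Definition greal : set gpt := fun x =>
  match x with inl _ => True | inr (e, t) => 0 < t < glen e end.

Definition gedge (e : gE G) : set gpt := fun x =>
  match x with inl _ => False | inr (e', t) => e' = e /\ 0 < t < glen e end.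

(* basic neighbourhoods: for small r these are exactly the metric balls
   of radius r in the geometric realization *)
Definition gball (x : gpt) (r : R) : set gpt :=
  match x with
  | inl v => fun y => match y with
      | inl w => w = v
      | inr (e, s) => 0 < s < glen e /\
          ((gsrc e = v /\ s < r) \/ (gdst e = v /\ glen e - s < r))
      end
  | inr (e, t) => fun y => match y with
      | inl _ => False
      | inr (e', s) => e' = e /\ 0 < s < glen e /\ `|s - t| < r
      end
  end.

Definition ginterior (A : set gpt) : set gpt :=
  fun x => A x /\ exists r, 0 < r /\ gball x r `<=` A.

Definition gclosure (A : set gpt) : set gpt :=
  fun x => greal x /\ forall r, 0 < r -> gball x r `&` A !=set0.

Definition gopen (A : set gpt) : Prop := A `<=` greal /\ A `<=` ginterior A.

Definition gbdry (A : set gpt) : set gpt := gclosure A `\` ginterior A.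

(* admissible: open, finite boundary (disjointness from the empty
   boundary of a closed graph is automatic) *)
Definition gadmissible (A : set gpt) : Prop := gopen A /\ finite_set (gbdry A).

Definition gpt_weight (x : gpt) : R :=
  match x with inl _ => 0 | inr (e, _) => ga e end.

Definition is_edge_pt (x : gpt) : Prop :=
  match x with inl _ => False | inr _ => True end.

Definition gA (Om : set gpt) : R :=
  (\sum_(x \in gbdry Om `&` is_edge_pt) gpt_weight x) +
  \sum_(v | `[< gbdry Om (inl v) >])
     \sum_(e | `[< gclosure (Om `&` gedge e) (inl v) >]) ga e.

Definition gvol (A : set gpt) : R := \sum_(v | `[< A (inl v) >]) gmu v.

(* exponent 1/nu - 1, with 1/oo = 0 *)
Definition iso_expo (nu : \bar R) : R :=
  match nu with EFin r => r^-1 - 1 | _ => -1 end.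

Definition Itilde (nu : \bar R) : \bar R :=
  ereal_inf [set z | exists Om : set gpt, [/\ gadmissible Om,
      0 < Num.min (gvol Om) (gvol (greal `\` Om)) &
      z = (gA Om * (Num.min (gvol Om) (gvol (greal `\` Om))) `^ iso_expo nu)%:E]].

Definition gedgefun (f : gpt -> R) (e : gE G) : R -> R := fun t => f (inr (e, t)).

Definition gcontinuous (f : gpt -> R) : Prop :=
  forall x, greal x -> forall eps, 0 < eps ->
    exists r, 0 < r /\ forall y, gball x r y -> `|f y - f x| < eps.

(* C^1_Dir for a closed graph (empty boundary, finitely many edges) *)
Definition C1Dir (f : gpt -> R) : Prop :=
  gcontinuous f /\
  forall e : gE G,
    (forall t, 0 < t < glen e -> derivable (gedgefun f e) t 1) /\
    (forall eps, 0 < eps -> exists d, 0 < d /\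
       forall s t, 0 < s < glen e -> 0 < t < glen e -> `|s - t| < d ->
         `|derive1 (gedgefun f e) s - derive1 (gedgefun f e) t| < eps).

Definition edge_open_itv (e : gE G) : set R := `]0, glen e[%classic.

Definition gradnorm1 (f : gpt -> R) : \bar R :=
  (\sum_(e : gE G) (ga e)%:E *
     \int[lebesgue_measure]_(t in edge_open_itv e)
        (`|derive1 (gedgefun f e) t|)%:E)%E.

Definition gLnorm (q : \bar R) (f : gpt -> R) : R :=
  match q with
  | EFin r => (\sum_(v : gV G) gmu v * `|f (inl v)| `^ r) `^ r^-1
  | _ => \big[Num.max/0]_(v : gV G) `|f (inl v)|
  end.

Definition dual_exp (nu : \bar R) : \bar R :=
  match nu with
  | EFin r => if r == 1 then +oo%E else (r / (r - 1))%:E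
  | +oo%E => 1%:E
  | -oo%E => -oo%E
  end.

Definition gsplit (f : gpt -> R) : Prop :=
  gvol [set x | greal x /\ 0 < f x] <= gvol greal / 2 /\
  gvol [set x | greal x /\ f x < 0] <= gvol greal / 2.

End GeometricRealization.

From HB Require Import structures.
From mathcomp Require Import all_boot all_order all_algebra.
From mathcomp Require Import all_classical all_reals all_analysis.
From mathcomp Require Import ring lra measurable_realfun.
Import Order.TTheory GRing.Theory Num.Theory.
Import numFieldNormedType.Exports.
Set Implicit Arguments. Unset Strict Implicit. Unset Printing Implicit Defensive.
Local Open Scope ring_scope.

(* Along each edge the fundamental theorem of calculus bounds the jump of [f]
   between the two endpoints by the integral of [|f'|], so [||grad f||_1]
   dominates the discrete total variation [sum_e a_e |f(src e) - f(dst e)|] of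
   the vertex values of [f].  For a vertex set [S], the open star of [S] (the
   vertices of [S] and the interiors of the edges meeting [S]) is admissible,
   its boundary weight is at most the cut of [S], and its volume weight in
   [Itilde] is the reciprocal of the [nu']-norm of the indicator of [S]; hence
   [Itilde ||1_S||_nu' <= cut S] whenever [S] has at most half the volume.
   A discrete coarea argument extends this to [f]: its positive and negative
   parts are supported on at most half the volume, and a nonnegative function
   is peeled off level set by level set, each step paying [Itilde] times the
   norm of an indicator by Minkowski's inequality. *)

Section WeightedLpNorm.
Variables (R : realType) (V : finType) (mu : V -> R).
Hypothesis mu_gt0 : forall v, 0 < mu v.

Let mu_ge0 v : 0 <= mu v. Proof. exact: ltW. Qed.

(* [-oo] is junk and is treated like [+oo], as in [gLnorm]. *)
Definition lpnorm (q : \bar R) (h : V -> R) : R :=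
  match q with
  | r%:E => (\sum_v mu v * `|h v| `^ r) `^ r^-1
  | _ => \big[Num.max/0]_v `|h v|
  end.

Lemma lpnorm_ge0 q h : 0 <= lpnorm q h.
Proof. by case: q => [r||] /=; rewrite ?powR_ge0 ?bigmax_ge_id. Qed.

Lemma eq_lpnorm q h1 h2 : (forall v, `|h1 v| = `|h2 v|) -> lpnorm q h1 = lpnorm q h2.
Proof.
by move=> h12; case: q => [r||] /=; [congr (_ `^ _)|..]; apply: eq_bigr => v _; rewrite h12.
Qed.

Lemma lpnorm0 q h : (1 <= q)%E -> (forall v, h v = 0) -> lpnorm q h = 0.
Proof.
move=> q1 h0; case: q q1 => [r||] //; rewrite ?lee_fin => r1 /=.
- rewrite big1 ?powR0 ?invr_eq0 ?gt_eqF //; first lra.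
  by move=> v _; rewrite h0 normr0 powR0 ?mulr0 ?gt_eqF //; lra.
- by apply/le_anti; rewrite bigmax_ge_id bigmax_le // => v _; rewrite h0 normr0.
Qed.

Lemma ler_lpnormZ q m h : (1 <= q)%E -> 0 <= m ->
  lpnorm q (fun v => m * h v) <= m * lpnorm q h.
Proof.
move=> q1 m0; case: q q1 => [r||] //; rewrite ?lee_fin => r1 /=.
- have r0 : r != 0 by rewrite gt_eqF //; lra.
  rewrite (_ : \sum_v _ = m `^ r * \sum_v mu v * `|h v| `^ r).
    rewrite powRM ?powR_ge0 ?sumr_ge0 // => [|v _]; last by rewrite mulr_ge0 ?powR_ge0.
    by rewrite -powRrM mulfV // powRr1.
  by rewrite mulr_sumr; apply: eq_bigr => v _; rewrite normrM (ger0_norm m0) powRM // mulrCA.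
- rewrite bigmax_le ?mulr_ge0 ?bigmax_ge_id // => v _.
  by rewrite normrM (ger0_norm m0) ler_wpM2l // le_bigmax.
Qed.

Lemma sum_powR_eq0 (g : V -> R) p : 0 < p -> (forall v, 0 <= g v) ->
  \sum_v mu v * g v `^ p = 0 -> forall v, g v = 0.
Proof.
move=> p0 g0 /eqP; rewrite psumr_eq0 => [/allP gP v|v _]; last by rewrite mulr_ge0 ?powR_ge0.
have /= := gP v (mem_index_enum v).
by rewrite mulf_eq0 gt_eqF //= => /eqP/powR_eq0_eq0.
Qed.

Lemma powR_lpnorm r h : 0 < r ->
  lpnorm r%:E h `^ r = \sum_v mu v * `|h v| `^ r.
Proof.
move=> r0; rewrite /= -powRrM mulVf ?gt_eqF // powRr1 //.
by rewrite sumr_ge0 // => v _; rewrite mulr_ge0 ?powR_ge0.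
Qed.

Lemma sum_powR_divr r (h : V -> R) A : 0 < A ->
  \sum_v mu v * (`|h v| / A) `^ r = (\sum_v mu v * `|h v| `^ r) / A `^ r.
Proof.
move=> A0; rewrite mulr_suml; apply: eq_bigr => v _.
rewrite powRM ?invr_ge0 ?normr_ge0 ?ltW //.
by rewrite -(powR_inv1 (ltW A0)) -powRrM mulN1r powRN mulrA.
Qed.

(* Convexity of [x `^ p] at [l * (g / A) + (1 - l) * (h / B)] with [l = A / (A + B)]. *)
Lemma sum_powRD_le p (g h : V -> R) A B : 1 <= p -> 0 < A -> 0 < B ->
  (forall v, 0 <= g v) -> (forall v, 0 <= h v) ->
  \sum_v mu v * (g v / A) `^ p <= 1 -> \sum_v mu v * (h v / B) `^ p <= 1 ->
  \sum_v mu v * (g v + h v) `^ p <= (A + B) `^ p.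
Proof.
move=> p1 A0 B0 g0 h0 gA hB; set l := A / (A + B).
have l0 : 0 <= l by rewrite divr_ge0 ?addr_ge0 ?ltW.
have l1 : l <= 1 by rewrite ler_pdivrMr ?addr_gt0 // mul1r lerDl ltW.
have l1' : 0 <= 1 - l by rewrite subr_ge0.
apply: (@le_trans _ _ ((A + B) `^ p * (l * \sum_v mu v * (g v / A) `^ p +
    (1 - l) * \sum_v mu v * (h v / B) `^ p))); last first.
  rewrite ger_pMr ?powR_gt0 ?addr_gt0 //.
  have := ler_wpM2l l0 gA; have := ler_wpM2l l1' hB; lra.
rewrite !mulr_sumr -big_split mulr_sumr; apply: ler_sum => v _ /=.
have gA0 : 0 <= g v / A by rewrite divr_ge0 ?g0 ?ltW.
have hB0 : 0 <= h v / B by rewrite divr_ge0 ?h0 ?ltW.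
have conv : (l * (g v / A) + (1 - l) * (h v / B)) `^ p <=
    l * (g v / A) `^ p + (1 - l) * (h v / B) `^ p.
  have := @convex_powR R p p1 (Itv01 l0 l1) (g v / A) (h v / B).
  by rewrite !convRE /=; apply; rewrite inE /= in_itv /= andbT.
have -> : g v + h v = (A + B) * (l * (g v / A) + (1 - l) * (h v / B)).
  by rewrite /l; field; rewrite ?gt_eqF ?addr_gt0.
have AB0 : 0 <= A + B by rewrite addr_ge0 // ltW.
rewrite (@powRM _ (A + B)) // ?addr_ge0 ?mulr_ge0 ?invr_ge0 ?(ltW A0) ?(ltW B0) //.
rewrite mulrCA ler_wpM2l ?powR_ge0 //; apply: le_trans (ler_wpM2l (mu_ge0 v) conv) _.
by rewrite mulrDr [mu v * (l * _)]mulrCA [mu v * (_ * _)]mulrCA.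
Qed.

Lemma ler_lpnormD q (g h : V -> R) : (1 <= q)%E ->
  lpnorm q (fun v => g v + h v) <= lpnorm q g + lpnorm q h.
Proof.
move=> q1; case: q q1 => [p||] //; rewrite ?lee_fin => p1; last first.
  rewrite /= bigmax_le ?addr_ge0 ?bigmax_ge_id // => v _.
  by rewrite (le_trans (ler_normD _ _)) // lerD // le_bigmax.
have p0 : 0 < p by lra.
have [A0|A0] := eqVneq (lpnorm p%:E g) 0.
  have g_eq0 := sum_powR_eq0 p0 (fun v => normr_ge0 (g v))
    ltac:(by rewrite -powR_lpnorm // A0 powR0 ?gt_eqF).
  rewrite A0 add0r (@eq_lpnorm _ _ h) // => v.
  by rewrite (normr0_eq0 (g_eq0 v)) add0r.
have [B0|B0] := eqVneq (lpnorm p%:E h) 0.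
  have h_eq0 := sum_powR_eq0 p0 (fun v => normr_ge0 (h v))
    ltac:(by rewrite -powR_lpnorm // B0 powR0 ?gt_eqF).
  rewrite B0 addr0 (@eq_lpnorm _ _ g) // => v.
  by rewrite (normr0_eq0 (h_eq0 v)) addr0.
have Ap : 0 < lpnorm p%:E g by rewrite lt_neqAle eq_sym A0 lpnorm_ge0.
have Bp : 0 < lpnorm p%:E h by rewrite lt_neqAle eq_sym B0 lpnorm_ge0.
have normalized k : 0 < lpnorm p%:E k ->
    \sum_v mu v * (`|k v| / lpnorm p%:E k) `^ p <= 1.
  move=> kp; rewrite sum_powR_divr // -powR_lpnorm // mulfV //.
  exact/lt0r_neq0/powR_gt0.
have sum_le : \sum_v mu v * `|g v + h v| `^ p <= (lpnorm p%:E g + lpnorm p%:E h) `^ p.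
  apply: le_trans (sum_powRD_le p1 Ap Bp (fun v => normr_ge0 (g v))
    (fun v => normr_ge0 (h v)) (normalized _ Ap) (normalized _ Bp)).
  apply: ler_sum => v _; rewrite ler_wpM2l //.
  by apply: (ge0_ler_powR (ltW p0)); rewrite ?nnegrE ?addr_ge0 ?ler_normD.
rewrite leNgt; apply/negP => /(gt0_ltr_powR p0).
rewrite !nnegrE addr_ge0 ?lpnorm_ge0 // powR_lpnorm //.
by move=> /(_ isT isT); rewrite ltNge sum_le.
Qed.

End WeightedLpNorm.

Lemma dist_funrpos_funrneg (R : realDomainType) (x y : R) :
  `|Num.max x 0 - Num.max y 0| + `|Num.max (- x) 0 - Num.max (- y) 0| = `|x - y|.
Proof.
wlog yx : x y / y <= x.
  move=> H; have [/H //|/ltW /H] := leP y x.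
  by rewrite distrC [X in _ + X]distrC [RHS]distrC.
have pos_neg (t : R) : Num.max t 0 - Num.max (- t) 0 = t.
  by rewrite /Num.max; case: (ltP t 0); case: (ltP (- t) 0); lra.
have := pos_neg x; have := pos_neg y.
rewrite ger0_norm ?subr_ge0 ?le_max2 // ler0_norm ?subr_le0 ?le_max2 ?lerN2 //.
rewrite ger0_norm ?subr_ge0 //; lra.
Qed.

Section DiscreteIsoperimetry.
Variables (R : realType) (V E : finType) (src dst : E -> V) (a : E -> R) (mu : V -> R).
Hypotheses (a_ge0 : forall e, 0 <= a e) (mu_gt0 : forall v, 0 < mu v).

Definition vol (S : {set V}) : R := \sum_(v in S) mu v.

Definition chi (S : {set V}) (v : V) : R := (v \in S)%:R.

Definition cut (S : {set V}) : R :=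
  \sum_e a e * ((src e \in S) != (dst e \in S))%:R.

Definition variation (g : V -> R) : R := \sum_e a e * `|g (src e) - g (dst e)|.

Lemma vol_gt0 (S : {set V}) : S != finset.set0 -> 0 < vol S.
Proof.
case/set0Pn => v vS; rewrite /vol (bigD1 v) //= ltr_pwDl // sumr_ge0 // => w _.
exact: ltW.
Qed.

Lemma le_vol (S T : {set V}) : S \subset T -> vol S <= vol T.
Proof.
move=> ST; rewrite /vol [X in _ <= X](bigID [in S]) /=.
rewrite [X in _ <= X + _](eq_bigl [in S]) ?lerDl; last first.
  by move=> v; rewrite andb_idl // => /(fintype.subsetP ST).
by rewrite sumr_ge0 // => v _; exact: ltW.
Qed.

Lemma sum_chi_powR S p : p != 0 -> \sum_v mu v * `|chi S v| `^ p = vol S.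
Proof.
move=> p0; rewrite /vol [RHS]big_mkcond; apply: eq_bigr => v _; rewrite /chi.
by case: (v \in S); rewrite ?normr1 ?powR1 ?mulr1 // normr0 powR0 ?mulr0.
Qed.

Lemma lpnorm_chi_pinfty S : S != finset.set0 -> lpnorm mu +oo%E (chi S) = 1.
Proof.
case/set0Pn => v vS; apply/le_anti; rewrite bigmax_le //=.
  by apply: le_trans (le_bigmax _ _ v); rewrite /chi vS normr1.
by move=> w _; rewrite /chi; case: (w \in S); rewrite ?normr1 ?normr0.
Qed.

Lemma variation_ge0 g : 0 <= variation g.
Proof. by apply: sumr_ge0 => e _; rewrite mulr_ge0. Qed.

(* One layer of the discrete coarea formula. *)
Lemma variation_peel g (S : {set V}) m : 0 <= m ->
  (forall v, v \notin S -> g v = 0) -> (forall v, v \in S -> m <= g v) ->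
  variation g = m * cut S + variation (fun v => g v - m * chi S v).
Proof.
move=> m0 gS mg; rewrite /variation /cut mulr_sumr -big_split; apply: eq_bigr => e _ /=.
rewrite mulrCA -mulrDr; congr (_ * _); rewrite /chi.
case: (boolP (src e \in S)) => uS; case: (boolP (dst e \in S)) => wS /=.
- by rewrite !mulr1 mulr0 add0r opprB addrA subrK.
- have gu := mg _ uS; rewrite (gS _ wS) !mulr1 !mulr0 !subr0 !ger0_norm; lra.
- have gw := mg _ wS; rewrite (gS _ uS) !mulr1 !mulr0 !subr0 !sub0r !normrN !ger0_norm; lra.
- by rewrite (gS _ uS) (gS _ wS) !mulr0 !subr0 add0r.
Qed.

Lemma variation_funrpos_funrneg f : variation f^\+ + variation f^\- = variation f.
Proof.
rewrite /variation -big_split; apply: eq_bigr => e _ /=.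
by rewrite -mulrDr dist_funrpos_funrneg.
Qed.

Variables (q : \bar R) (I : R).
Hypotheses (q_ge1 : (1 <= q)%E) (I_ge0 : 0 <= I).
Hypothesis isoperimetric : forall S : {set V}, S != finset.set0 ->
  vol S <= vol [set: V] / 2 -> I * lpnorm mu q (chi S) <= cut S.

Lemma isoperimetric_nonneg g : (forall v, 0 <= g v) ->
  vol [set v | 0 < g v] <= vol [set: V] / 2 -> I * lpnorm mu q g <= variation g.
Proof.
have [n] := ubnP #|[set v | 0 < g v]|; elim: n g => // n IH g supp_n g0.
set S := [set v | 0 < g v] in supp_n *; move=> volS.
have gS v : v \notin S -> g v = 0.
  by rewrite inE -leNgt => gv; apply/le_anti; rewrite gv g0.
have [S0|[v0 v0S]] := set_0Vmem S.
  rewrite lpnorm0 ?mulr0 ?variation_ge0 // => v.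
  by apply: gS; rewrite S0 inE.
have [vm vmS vm_min] := arg_minP g v0S; set m := g vm.
have m0 : 0 < m by move: (vmS : vm \in S); rewrite inE.
pose g' v := g v - m * chi S v.
have g'0 v : 0 <= g' v.
  rewrite /g' /chi; case: (boolP (v \in S)) => vS; last by rewrite mulr0 subr0.
  by rewrite mulr1 subr_ge0 vm_min.
have supp' : [set v | 0 < g' v] \subset S :\ vm.
  apply/fintype.subsetP => v; rewrite inE /g' /chi => g'v.
  have vS : v \in S.
    by apply: contraLR g'v => /[dup] /gS -> /negPf ->; rewrite mulr0 subr0 ltxx.
  rewrite in_setD1 vS andbT; apply: contraTneq g'v => ->.
  by rewrite (vmS : vm \in S) mulr1 subrr ltxx.
have IH' : I * lpnorm mu q g' <= variation g'.
  apply: IH => //.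
    apply: leq_ltn_trans (subset_leq_card supp') _.
    by move: supp_n; rewrite (cardsD1 vm S) (vmS : vm \in S).
  by apply: le_trans volS; apply/le_vol/(fintype.subset_trans supp')/subD1set.
rewrite (variation_peel (ltW m0) gS) //.
have -> : lpnorm mu q g = lpnorm mu q (fun v => m * chi S v + g' v).
  by apply: eq_lpnorm => v; rewrite /g' addrC subrK.
apply: le_trans (_ : I * (m * lpnorm mu q (chi S) + lpnorm mu q g') <= _).
  rewrite ler_wpM2l // (le_trans (ler_lpnormD _ _ _ _)) // lerD2r.
  exact/ler_lpnormZ/ltW.
rewrite mulrDr mulrCA lerD // ler_wpM2l ?(ltW m0) // isoperimetric //.
by apply/set0Pn; exists v0.
Qed.

Lemma isoperimetric_split f :
  vol [set v | 0 < f v] <= vol [set: V] / 2 ->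
  vol [set v | f v < 0] <= vol [set: V] / 2 ->
  I * lpnorm mu q f <= variation f.
Proof.
move=> pos_half neg_half.
have supp_pos : [set v | 0 < f^\+ v] = [set v | 0 < f v].
  by apply/setP => v; rewrite !inE /funrpos lt_max ltxx orbF.
have supp_neg : [set v | 0 < f^\- v] = [set v | f v < 0].
  by apply/setP => v; rewrite !inE /funrneg lt_max ltxx orbF oppr_gt0.
have -> : lpnorm mu q f = lpnorm mu q (fun v => f^\+ v + f^\- v).
  apply: eq_lpnorm => v; have := congr1 (fun F => F v) (funrposDneg f).
  by rewrite /= !fctE => ->; rewrite normr_id.
rewrite -variation_funrpos_funrneg.
apply: le_trans (_ : I * (lpnorm mu q f^\+ + lpnorm mu q f^\-) <= _).
  by rewrite ler_wpM2l // ler_lpnormD.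
by rewrite mulrDr lerD // isoperimetric_nonneg ?supp_pos ?supp_neg.
Qed.

End DiscreteIsoperimetry.

Arguments chi {R V} S v.

Section EdgeIntegral.
Variable R : realType.
Local Open Scope classical_set_scope.

Lemma uniform_continuous_oo_continuous (h : R -> R) (l : R) :
  (forall eps, 0 < eps -> exists d, 0 < d /\ forall s t, 0 < s < l -> 0 < t < l ->
    `|s - t| < d -> `|h s - h t| < eps) ->
  {in `]0, l[, continuous h}.
Proof.
move=> hu x; rewrite inE /= in_itv /= => /andP[x0 xl]; apply/cvgrPdist_lt => eps eps0.
have [d [d0 hd]] := hu eps eps0.
apply/nbhs_ballP; exists (Num.min d (Num.min x (l - x))) => /=.
  by rewrite !lt_min d0 x0 subr_gt0 xl.
move=> t; rewrite /ball /= !lt_min => /and3P[td tx tl].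
apply: hd => //; first by rewrite x0 xl.
by move: tx tl; rewrite !ltr_distlC => /andP[? ?] /andP[? ?]; apply/andP; split; lra.
Qed.

Variables (g : R -> R) (l : R).
Hypotheses (g_derivable : forall t, 0 < t < l -> derivable g t 1)
  (g'_continuous : {in `]0, l[, continuous (derive1 g)}).

Lemma abs_sub_le_integral_derive a b : 0 < a -> a < b -> b < l ->
  (`|g b - g a|%:E <= \int[lebesgue_measure]_(t in `]0%R, l[) (`|derive1 g t|)%:E)%E.
Proof.
move=> a0 ab bl.
have ab_sub : `[a, b] `<=` `]0, l[.
  by move=> x; rewrite /= !in_itv /= => /andP[? ?]; apply/andP; split; lra.
have g'_meas : measurable_fun `]0, l[ (derive1 g).
  by apply: open_continuous_measurable_fun g'_continuous; exact: interval_open.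
have g'_cont : {within `[a, b], continuous (derive1 g)}.
  apply: continuous_in_subspaceT => x; rewrite inE => /ab_sub xl.
  by apply: g'_continuous; rewrite inE.
have der t : a <= t <= b -> derivable g t 1.
  by move=> /andP[? ?]; apply: g_derivable; apply/andP; split; lra.
have g_cont t : a <= t <= b -> {for t, continuous g}.
  by move=> /der; rewrite derivable1_diffP => /differentiable_continuous.
have gFTC : derivable_oo_LRcontinuous g a b.
  split.
  - by move=> x; rewrite in_itv /= => /andP[? ?]; apply: der; apply/andP; split; lra.
  - by apply/cvg_at_right_filter/g_cont; rewrite lexx ltW.
  - by apply/cvg_at_left_filter/g_cont; rewrite lexx ltW.
rewrite -[`|_|%:E]/(`|(g b)%:E - (g a)%:E|%E).
rewrite -(continuous_FTC2 ab g'_cont gFTC (fun _ _ => erefl)).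
apply: (le_trans (le_abse_integral _ _ _)) => //.
  by apply/measurable_EFinP; exact: measurable_funS ab_sub g'_meas.
apply: ge0_subset_integral => //.
exact/measurable_EFinP/measurableT_comp.
Qed.

Lemma abs_sub_lim_le_integral_derive u w : 0 < l ->
  (forall eps, 0 < eps -> exists r,
    0 < r /\ forall s, 0 < s < l -> s < r -> `|g s - u| < eps) ->
  (forall eps, 0 < eps -> exists r,
    0 < r /\ forall s, 0 < s < l -> l - s < r -> `|g s - w| < eps) ->
  (`|u - w|%:E <= \int[lebesgue_measure]_(t in `]0%R, l[) (`|derive1 g t|)%:E)%E.
Proof.
move=> l0 lim_u lim_w; apply/lee_addgt0Pr => eps eps0.
have eps2 : 0 < eps / 2 by rewrite divr_gt0.
have [r1 [r1_gt0 near_u]] := lim_u _ eps2.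
have [r2 [r2_gt0 near_w]] := lim_w _ eps2.
have small (r : R) : 0 < r -> exists c, [/\ 0 < c, c <= l / 3 & c < r].
  move=> r0; exists (Num.min (r / 2) (l / 3)); split.
  - by rewrite lt_min !divr_gt0.
  - by rewrite ge_min lexx orbT.
  - by rewrite gt_min; apply/orP; left; lra.
have [a [a0 al ar1]] := small _ r1_gt0.
have [c [c0 cl cr2]] := small _ r2_gt0.
have ab : a < l - c by lra.
have bl : l - c < l by lra.
have near_ua := near_u a ltac:(apply/andP; split; lra) ar1.
have near_wb := near_w (l - c) ltac:(apply/andP; split; lra) ltac:(lra).
apply: le_trans (leeD2r _ (abs_sub_le_integral_derive a0 ab bl)).
rewrite -EFinD lee_fin.
have := ler_distD (g a) u w; have := ler_distD (g (l - c)) (g a) w.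
rewrite (distrC u (g a)) (distrC (g a) (g (l - c))); lra.
Qed.

End EdgeIntegral.

Section GraphIsoperimetry.
Variables (R : realType) (G : closed_graph R).
Local Open Scope classical_set_scope.
Local Notation V := (gV G).
Local Notation mu := (@gmu R G).
Local Notation vvol := (vol mu).
Local Notation gcut := (cut (@gsrc R G) (@gdst R G) (@ga R G)).
Local Notation gvariation := (variation (@gsrc R G) (@gdst R G) (@ga R G)).

Let ga_ge0 (e : gE G) : 0 <= ga e. Proof. exact: ltW (ga_gt0 e). Qed.

Definition open_star (S : {set V}) : set (gpt G) := fun x =>
  match x with
  | inl v => v \in S
  | inr (e, t) => 0 < t < glen e /\ ((gsrc e \in S) || (gdst e \in S))
  end.

Lemma open_star_ball S x r : open_star S x -> gball x r `<=` open_star S.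
Proof.
case: x => [v|[e t]] /= Sx [w|[e' s]] //=.
- by move=> ->.
- by case=> s_in [[-> _]|[-> _]]; split; rewrite // Sx ?orbT.
- by case=> -> [s_in _]; case: Sx.
Qed.

Lemma gopen_open_star S : gopen (open_star S).
Proof.
split; first by case=> [v|[e t]] //= [].
by move=> x Sx; split => //; exists 1; split => //; exact: open_star_ball.
Qed.

Lemma gclosure_open_star_edge S e t :
  gclosure (open_star S) (inr (e, t)) -> open_star S (inr (e, t)).
Proof.
case=> /= t_in /(_ 1 ltr01) [[w|[e' s]]] [] //=.
by case=> ee' _ [_ Se]; subst e'; split.
Qed.

Lemma gbdry_open_star S x : gbdry (open_star S) x -> exists2 v, x = inl v & v \notin S.
Proof.
case: x => [v|[e t]] [cl_x not_int]; last first.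
  have Sx := gclosure_open_star_edge cl_x.
  by case: not_int; split => //; exists 1; split => //; exact: open_star_ball.
exists v => //; apply/negP => Sv; apply: not_int; split => //.
by exists 1; split => //; exact: open_star_ball.
Qed.

Lemma gadmissible_open_star S : gadmissible (open_star S).
Proof.
split; first exact: gopen_open_star.
apply: (@sub_finite_set _ _ (inl @` setT)); last exact/finite_image/finite_finset.
by move=> x /gbdry_open_star [v -> _]; exists v.
Qed.

Lemma gclosure_open_star_incident S v e :
  gclosure (open_star S `&` gedge e) (inl v) ->
  ((gsrc e == v) || (gdst e == v)) && ((gsrc e \in S) || (gdst e \in S)).
Proof.
case=> _ /(_ 1 ltr01) [[w|[e' s]] [near_v [Sx ex]]]; first by case: ex.
case: ex => ee' _; subst e'; case: Sx => _ ->; rewrite andbT.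
by case: near_v => _ [[<- _]|[<- _]]; rewrite eqxx ?orbT.
Qed.

(* Each boundary vertex [v] of the star lies outside [S] and is charged only
   for edges leaving [S] whose outer endpoint is [v]. *)
Lemma gA_open_star S : gA (open_star S) <= gcut S.
Proof.
have no_edge_pts : gbdry (open_star S) `&` @is_edge_pt R G = set0.
  by apply/seteqP; split => // x [/gbdry_open_star [v -> _]].
rewrite /gA no_edge_pts fsbig_set0 add0r.
pose crossing e := (gsrc e \in S) != (gdst e \in S).
pose outer e := if gsrc e \in S then gdst e else gsrc e.
apply: (@le_trans _ _ (\sum_v \sum_(e | crossing e && (outer e == v)) ga e)).
  rewrite big_mkcond /=; apply: ler_sum => v _.
  case: asboolP => [/gbdry_open_star [_ [<-] vS]|_]; last exact: sumr_ge0.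
  have outer_crossing e :
      ((gsrc e == v) || (gdst e == v)) && ((gsrc e \in S) || (gdst e \in S)) ->
      crossing e && (outer e == v).
    rewrite /crossing /outer.
    by case/andP => /orP[]/eqP-> /orP[] ES; rewrite ?(negPf vS) ?ES //= ?eqxx;
      move: vS; rewrite ?ES.
  rewrite big_mkcond [X in _ <= X]big_mkcond /=; apply: ler_sum => e _.
  case: asboolP => [/gclosure_open_star_incident/outer_crossing -> //|_].
  by case: ifP.
rewrite -partition_big //= /cut big_mkcond /=; apply: ler_sum => e _.
by rewrite /crossing; case: ifP; rewrite ?mulr1 ?mulr0.
Qed.

Lemma gA_ge0 (Om : set (gpt G)) : 0 <= gA Om.
Proof.
rewrite /gA addr_ge0 //; first by apply: fsumr_ge0 => -[v|[e t]] _ //=.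
by apply: sumr_ge0 => v _; apply: sumr_ge0 => e _.
Qed.

Lemma Itilde_ge0 nu : (0 <= Itilde G nu)%E.
Proof.
apply: le_ereal_inf_tmp => z [Om [_ _ ->]].
by rewrite lee_fin mulr_ge0 ?gA_ge0 ?powR_ge0.
Qed.

Lemma gvol_vertices (P : pred (gpt G)) :
  gvol [set x | greal x /\ P x] = vvol [set v | P (inl v)]%SET.
Proof. by apply: eq_bigl => v; rewrite inE; apply/asboolP/idP => [[]|]. Qed.

Lemma gvol_greal : gvol (@greal R G) = vvol [set: V]%SET.
Proof. by rewrite /vol /gvol; apply: eq_bigl => v; rewrite asboolT // inE. Qed.

Lemma gvol_open_star S : gvol (open_star S) = vvol S.
Proof. by apply: eq_bigl => v; apply/asboolP/idP. Qed.

Lemma gvol_greal_open_star S :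
  gvol (@greal R G `\` open_star S) = vvol [set: V]%SET - vvol S.
Proof.
rewrite /vol /gvol (big_setID S) /= finset.setTI addrC addrK; apply: eq_bigl => v.
by rewrite !inE andbT; apply/asboolP/idP => [[_ /negP]|/negP].
Qed.

Lemma Itilde_le_open_star nu S : S != finset.set0 -> vvol S <= vvol [set: V]%SET / 2 ->
  (Itilde G nu <= (gA (open_star S) * vvol S `^ iso_expo nu)%:E)%E.
Proof.
move=> S0 S_half; have S_gt0 := vol_gt0 (fun v => gmu_gt0 v) S0.
apply: ereal_inf_lbound; exists (open_star S); split.
- exact: gadmissible_open_star.
- by rewrite gvol_open_star gvol_greal_open_star lt_min S_gt0 /=; lra.
- by rewrite gvol_open_star gvol_greal_open_star min_l //; lra.
Qed.

Lemma iso_expo_lpnorm_chi nu S : (1 <= nu)%E -> S != finset.set0 ->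
  vvol S `^ iso_expo nu * lpnorm mu (dual_exp nu) (chi S) = 1.
Proof.
move=> nu_ge1 S0; have S_gt0 := vol_gt0 (fun v => gmu_gt0 v) S0.
case: nu nu_ge1 => [r||] //; rewrite ?lee_fin => r_ge1 /=.
- have [->|r_neq1] := eqVneq r 1.
    by rewrite invr1 subrr powRr0 mul1r lpnorm_chi_pinfty.
  have r_gt1 : 1 < r by rewrite lt_neqAle eq_sym r_neq1.
  have p0 : r / (r - 1) != 0 by apply/lt0r_neq0/divr_gt0; lra.
  rewrite /= sum_chi_powR // -powRD; last by rewrite (gt_eqF S_gt0) implybT.
  by rewrite (_ : _ + _ = 0) ?powRr0 //; field; rewrite gt_eqF ?subr_gt0; lra.
- by rewrite sum_chi_powR ?oner_neq0 // invr1 !powRr1 ?ltW // powR_inv1 ?ltW // mulVf ?gt_eqF.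
Qed.

Lemma Itilde_isoperimetric nu I : (1 <= nu)%E -> Itilde G nu = I%:E ->
  forall S, S != finset.set0 -> vvol S <= vvol [set: V]%SET / 2 ->
  I * lpnorm mu (dual_exp nu) (chi S) <= gcut S.
Proof.
move=> nu_ge1 I_def S S0 S_half.
have := Itilde_le_open_star nu S0 S_half; rewrite I_def lee_fin => I_le.
apply: le_trans (gA_open_star S).
rewrite -[leRHS]mulr1 -(iso_expo_lpnorm_chi nu_ge1 S0) mulrA.
by rewrite ler_wpM2r ?lpnorm_ge0.
Qed.

Lemma Itilde_pinfty_eq0 nu (f : gpt G -> R) : Itilde G nu = +oo%E ->
  vvol [set v | 0 < f (inl v)]%SET <= vvol [set: V]%SET / 2 ->
  vvol [set v | f (inl v) < 0]%SET <= vvol [set: V]%SET / 2 ->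
  forall v, f (inl v) = 0.
Proof.
move=> I_def pos_half neg_half v; apply/eqP; apply: contraT; rewrite neq_lt.
move=> /orP[f_neg|f_pos]; [move: neg_half|move: pos_half] => /(Itilde_le_open_star nu).
  by rewrite I_def; apply; apply/set0Pn; exists v; rewrite inE.
by rewrite I_def; apply; apply/set0Pn; exists v; rewrite inE.
Qed.

Lemma dual_exp_ge1 (nu : \bar R) : (1 <= nu)%E -> (1 <= dual_exp nu)%E.
Proof.
case: nu => [r||] //; rewrite ?lee_fin => r_ge1 /=.
case: eqVneq => [_|r_neq1]; first exact: leey.
have r_gt1 : 1 < r by rewrite lt_neqAle eq_sym r_neq1.
by rewrite -[1%E]/(1%:E) lee_fin ler_pdivlMr ?subr_gt0 //; lra.
Qed.

Lemma gLnormE q (f : gpt G -> R) : gLnorm q f = lpnorm mu q (fun v => f (inl v)).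
Proof. by case: q. Qed.

Lemma variation_le_gradnorm1 (f : gpt G -> R) :
  C1Dir f -> ((gvariation (fun v => f (inl v)))%:E <= gradnorm1 f)%E.
Proof.
case=> f_cont f_C1; rewrite /variation -sumEFin; apply: lee_sum => e _; rewrite EFinM.
apply: lee_wpmul2l; first by rewrite lee_fin.
have [f_derivable f'_ucont] := f_C1 e.
apply: (abs_sub_lim_le_integral_derive f_derivable
  (uniform_continuous_oo_continuous f'_ucont) (glen_gt0 e)).
- move=> eps eps0; have [r [r0 near_src]] := f_cont (inl (gsrc e)) Logic.I eps eps0.
  by exists r; split => // s s_in sr; apply: (near_src (inr (e, s))); split => //; left.
- move=> eps eps0; have [r [r0 near_dst]] := f_cont (inl (gdst e)) Logic.I eps eps0.
  by exists r; split => // s s_in sr; apply: (near_dst (inr (e, s))); split => //; right.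
Qed.

End GraphIsoperimetry.

Theorem mainTheorem5 (R : realType) (G : closed_graph R) (nu : \bar R)
  (f : gpt G -> R) :
  (1%:E <= nu)%E -> C1Dir f -> gsplit f ->
  (Itilde G nu * (gLnorm (dual_exp nu) f)%:E <= gradnorm1 f)%E.
Proof.
move=> nu_ge1 f_C1 []; rewrite !gvol_vertices gvol_greal gLnormE => pos_half neg_half.
have var_le := variation_le_gradnorm1 f_C1.
have mu_gt0 := @gmu_gt0 R G; have a_ge0 e := ltW (@ga_gt0 R G e).
case I_def: (Itilde G nu) (Itilde_ge0 G nu) => [I| |] // I_ge0.
  apply: le_trans var_le; rewrite -EFinM lee_fin.
  apply: isoperimetric_split pos_half neg_half => //; first exact: dual_exp_ge1.
  exact: Itilde_isoperimetric.
rewrite lpnorm0 ?mule0 ?dual_exp_ge1 //; last exact: Itilde_pinfty_eq0 I_def _ _.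
by apply: le_trans var_le; rewrite lee_fin variation_ge0.
Qed.
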